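(* Let $K,n\in\mathbb{N}^*$ and $\mu\in H^3((0,1),\mathbb{R})$ satisfy (H2)$_{K,n}$. Then there exist at least $n$ indices $j\in\mathbb{N}^*$ with $c_j\neq0$.
   Context: $\varphi_j=\sqrt2\sin(j\pi x)$, $\lambda_j=(j\pi)^2$, $c_j=\langle\mu\varphi_1,\varphi_j\rangle\langle\mu\varphi_K,\varphi_j\rangle$ with $\langle f,g\rangle=\int_0^1f\bar g$. (H2)$_{K,n}$: $\sum_jj^{4n}|c_j|<\infty$ and, with $A^p_K=(-1)^{p-1}\sum_{j}(\lambda_j-\frac{\lambda_1+\lambda_K}2)(\lambda_K-\lambda_j)^{p-1}(\lambda_j-\lambda_1)^{p-1}c_j$, one has $A^p_K=0$ for $1\le p\le n-1$ and $A^n_K\ne0$. *)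

From HB Require Import structures.
From mathcomp Require Import all_boot all_order all_algebra.
From mathcomp Require Import all_classical all_reals all_analysis.
Set Implicit Arguments. Unset Strict Implicit. Unset Printing Implicit Defensive.
Import Order.TTheory GRing.Theory Num.Theory numFieldNormedType.Exports.
Local Open Scope classical_set_scope.
Local Open Scope ring_scope.

Section Defs.
Variable R : realType.

Notation leb := (@lebesgue_measure R).

Definition phi (j : nat) (x : R) : R := Num.sqrt 2 * sin (j%:R * pi * x).
Definition lambda (j : nat) : R := (j%:R * pi) ^+ 2.

Definition inner (f g : R -> R) : R := \int[leb]_(x in `[(0%R:R), 1]) (f x * g x).

Definition coef (mu : R -> R) (K j : nat) : R :=
  inner (fun x => mu x * phi 1 x) (phi j) * inner (fun x => mu x * phi K x) (phi j).

Definition Aterm (mu : R -> R) (K p j : nat) : R :=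
  (lambda j - (lambda 1 + lambda K) / 2) * (lambda K - lambda j) ^+ (p.-1)
  * (lambda j - lambda 1) ^+ (p.-1) * coef mu K j.
Definition AKp (mu : R -> R) (K p : nat) : R :=
  (-1) ^+ (p.-1) * limn (fun N => \sum_(1 <= j < N) Aterm mu K p j).

Definition H2 (mu : R -> R) (K n : nat) : Prop :=
  (\sum_(1 <= j <oo) (((j%:R : R) ^+ (4 * n) * `|coef mu K j|)%:E) < +oo)%E /\
  (forall p, (1 <= p <= n.-1)%N -> AKp mu K p = 0) /\
  AKp mu K n != 0.

Definition L2_01 (g : R -> R) : Prop :=
  measurable_fun `](0%R:R), 1%R[ g /\
  (\int[leb]_(x in `](0%R:R), 1%R[) ((g x) ^+ 2)%:E < +oo)%E.

Definition test_fun (f : R -> R) : Prop :=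
  (forall (k : nat) (x : R), derivable (derive1n k f) x 1) /\
  exists a b : R, [/\ 0 < a, a < b, b < 1 &
    forall x, x < a \/ b < x -> f x = 0].

Definition weak_deriv (k : nat) (f g : R -> R) : Prop :=
  forall phi0 : R -> R, test_fun phi0 ->
    \int[leb]_(x in `](0%R:R), 1%R[) (f x * derive1n k phi0 x)
    = (-1) ^+ k * \int[leb]_(x in `](0%R:R), 1%R[) (g x * phi0 x).

Definition H3_01 (mu : R -> R) : Prop :=
  L2_01 mu /\ forall k : nat, (1 <= k <= 3)%N ->
    exists g : R -> R, L2_01 g /\ weak_deriv k mu g.

End Defs.

From HB Require Import structures.
From mathcomp Require Import all_boot all_order all_algebra.
From mathcomp Require Import all_classical all_reals all_analysis.
From mathcomp Require Import ring.
Import Order.TTheory GRing.Theory Num.Theory numFieldNormedType.Exports.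
Local Open Scope ring_scope.

(* Up to sign, A^p_K is the (p-1)-th power moment of the weights
   w_j = (l_j - (l_1 + l_K)/2) c_j at the nodes x_j = (l_K - l_j)(l_j - l_1).
   If only finitely many c_j are nonzero, say s of them, then these moments
   form a finite sum over s indices, and s consecutive vanishing moments of
   s weighted nodes force all higher moments to vanish (a Vandermonde
   argument); so A^p_K = 0 for p < n and A^n_K <> 0 leave at least n
   nonzero c_j.  If infinitely many c_j are nonzero there is nothing to prove. *)

Lemma power_moment_eq0 (R : comPzRingType) (x w : nat -> R) (s : seq nat) (m : nat) :
  (size s <= m)%N -> (forall i, (i < m)%N -> \sum_(j <- s) w j * x j ^+ i = 0) ->
  \sum_(j <- s) w j * x j ^+ m = 0.
Proof.
elim: s w m => [|a s IHs] w m; first by rewrite big_nil.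
case: m => [//|m] size_s moments0.
(* Multiplying the weights by x_j - x_a kills the index a and shifts the moments. *)
pose w' j := w j * (x j - x a).
have moment_w' i : \sum_(j <- s) w' j * x j ^+ i =
    \sum_(j <- a :: s) w j * x j ^+ i.+1 - x a * \sum_(j <- a :: s) w j * x j ^+ i.
  rewrite mulr_sumr -sumrB big_cons exprS mulrCA subrr add0r.
  by apply: eq_bigr => j _; rewrite /w' exprS; ring.
have := IHs w' m size_s; rewrite moment_w' (moments0 m) // mulr0 subr0.
apply=> i lt_im; rewrite moment_w' !moments0 ?mulr0 ?subr0 //.
by rewrite ltnS ltnW.
Qed.

Lemma bounded_or_unbounded (P : pred nat) :
  (exists N, forall j, (N <= j)%N -> ~~ P j) \/ (forall N, exists2 j, (N <= j)%N & P j).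
Proof.
have [|unbounded] := pselect (forall N, exists2 j, (N <= j)%N & P j); first by right.
left; have /existsNP[N noP] := unbounded; exists N => j le_Nj.
by apply/negP => Pj; apply: noP; exists j.
Qed.

Lemma unbounded_uniq_seq (P : pred nat) :
  (forall N, exists2 j, (N <= j)%N & P j) ->
  forall k, exists s : seq nat, [/\ uniq s, size s = k & all P s].
Proof.
move=> unbounded; elim=> [|k [s [s_uniq size_s all_Ps]]]; first by exists [::].
have [j lt_sj Pj] := unbounded (\max_(i <- s) i).+1.
have j_notin_s : j \notin s.
  apply/negP => /(@leq_bigmax_seq _ s xpredT id j)/(_ isT).
  by move/(leq_trans lt_sj); rewrite ltnn.
by exists (j :: s); rewrite /= j_notin_s Pj size_s.
Qed.

Section FiniteSupport.
Variables (R : realType) (mu : R -> R) (K : nat).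

Definition Aweight (j : nat) : R :=
  (lambda R j - (lambda R 1 + lambda R K) / 2) * coef mu K j.
Definition Anode (j : nat) : R := (lambda R K - lambda R j) * (lambda R j - lambda R 1).

Definition coef_support (N : nat) : seq nat :=
  [seq j <- index_iota 1 N.+1 | coef mu K j != 0].

Lemma coef_supportP N j :
  j \in coef_support N -> (0 < j)%N /\ coef mu K j != 0.
Proof. by rewrite mem_filter mem_index_iota => /andP[-> /andP[-> _]]. Qed.

Lemma coef_support_uniq N : uniq (coef_support N).
Proof. by rewrite filter_uniq // iota_uniq. Qed.

Variable N : nat.
Hypothesis coef_vanish : forall j, (N < j)%N -> coef mu K j = 0.

Lemma AKp_coef_support p :
  AKp mu K p = (-1) ^+ p.-1 * \sum_(j <- coef_support N) Aweight j * Anode j ^+ p.-1.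
Proof.
rewrite /AKp; congr (_ * _); apply: lim_near_cst; first exact: norm_hausdorff.
exists N.+1 => // M /= lt_NM; rewrite (big_cat_nat _ (n := N.+1)) //=.
rewrite [X in _ + X]big1_seq ?addr0; last first.
  by move=> j /andP[_]; rewrite mem_index_iota => /andP[lt_Nj _]; rewrite /Aterm coef_vanish ?mulr0.
rewrite big_filter [RHS]big_mkcond /=; apply: eq_bigr => j _.
rewrite /Aterm /Aweight /Anode.
have [->|_] := eqVneq (coef mu K j) 0; first by rewrite !(mulr0, mul0r).
by rewrite exprMn; ring.
Qed.

Lemma coef_support_size n :
  (0 < n)%N -> (forall p, (1 <= p <= n.-1)%N -> AKp mu K p = 0) -> AKp mu K n != 0 ->
  (n <= size (coef_support N))%N.
Proof.
move=> n_gt0 AKp0 /negP AKn0; rewrite leqNgt; apply/negP => small_support.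
apply: AKn0; rewrite AKp_coef_support power_moment_eq0 ?mulr0 //.
  by rewrite -ltnS prednK.
move=> i lt_in; have /AKp0/eqP : (1 <= i.+1 <= n.-1)%N by [].
by rewrite AKp_coef_support mulf_eq0 signr_eq0 => /eqP.
Qed.

End FiniteSupport.

Theorem lemma5p3 (R : realType) (K n : nat) (mu : R -> R) :
  (0 < K)%N -> (0 < n)%N -> H3_01 mu -> H2 mu K n ->
  exists S : seq nat,
    [/\ uniq S, (n <= size S)%N & forall j, j \in S -> (0 < j)%N /\ coef mu K j != 0].
Proof.
move=> _ n_gt0 _ [_ [AKp0 AKn0]].
have [[N coef_vanish]|unbounded] := bounded_or_unbounded (fun j => coef mu K j != 0).
  exists (coef_support R mu K N); split.
  - exact: coef_support_uniq.
  - apply: (@coef_support_size R mu K N _ n n_gt0 AKp0 AKn0) => j /ltnW/coef_vanish.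
    by rewrite negbK => /eqP.
  - exact: coef_supportP.
have [|S [S_uniq size_S /allP S_nz]] :=
  @unbounded_uniq_seq (fun j => (0 < j)%N && (coef mu K j != 0)) _ n.
  by move=> M; have [j le_Mj cj] := unbounded M.+1; exists j; rewrite ?(leq_trans _ le_Mj) ?cj.
by exists S; rewrite size_S; split=> // j /S_nz /andP.
Qed.
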